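(* Let $k\in\mathbb{N}$ and let $\{f_n\}$ be a sequence of functions in $\mathcal{L}^{(k)}_0$ converging to $0$ pointwise on $T$ and such that $\{\|f_n\|_k\}$ is bounded. Then $f_n\to0$ weakly in $\mathcal{L}^{(k)}_0$.
   Context: $T$ is a tree (locally finite, connected, simply connected graph, identified with its vertex set) without terminal vertices, rooted at $o$. $|v|$ is the distance from $o$ to $v$; for $v\ne o$, $v^-$ is the parent of $v$. $T^*=T\setminus\{o\}$, $Df(v)=|f(v)-f(v^-)|$. For $x\ge1$: $\ell_0(x)=1$, $\ell_1(x)=1+\ln x$, $\ell_j(x)=1+\ln\ell_{j-1}(x)$ for $j\ge2$. $\mathcal{L}^{(k)}$ is the space of $f:T\to\mathbb{C}$ with $\sup_{v\in T^*}|v|\prod_{j=0}^{k-1}\ell_j(|v|)Df(v)<\infty$, normed by $\|f\|_k=|f(o)|+\sup_{v\in T^*}|v|\prod_{j=0}^{k-1}\ell_j(|v|)Df(v)$; $\mathcal{L}^{(k)}_0$ is its subspace (with the same norm) of $f$ with $\lim_{|v|\to\infty}|v|\prod_{j=0}^{k-1}\ell_j(|v|)Df(v)=0$. *)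

From Stdlib Require Import Reals List.
From Coquelicot Require Import Coquelicot.
Open Scope R_scope.

(* The graph on [vtx]
   has an edge between u and v iff one is the parent of the other (and is not
   the root).  [depth] is the number of parent steps to the root, i.e. the
   graph distance |v| to the root.  Since depth strictly decreases along the
   parent map, the graph is connected and simply connected (a tree). *)
Record rooted_tree := {
  vtx :> Type;
  root : vtx;
  parent : vtx -> vtx;
  depth : vtx -> nat;
  depth_root : depth root = 0%nat;
  depth_parent : forall v, v <> root -> depth v = S (depth (parent v));
  depth_zero : forall v, depth v = 0%nat -> v = root;
  locally_finite : forall v, exists l : list vtx,
      forall u, (u <> root /\ parent u = v) \/ (v <> root /\ parent v = u) -> In u l;
  no_terminal : forall v, ~ (exists w, forall u,
      ((u <> root /\ parent u = v) \/ (v <> root /\ parent v = u)) <-> u = w)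
}.

Fixpoint ell (j : nat) (x : R) : R :=
  match j with
  | O => 1
  | S j' => match j' with
            | O => 1 + ln x
            | S _ => 1 + ln (ell j' x)
            end
  end.

Fixpoint ell_prod (k : nat) (x : R) : R :=
  match k with
  | O => 1
  | S k' => ell_prod k' x * ell k' x
  end.

Definition weight (k : nat) (n : nat) : R := INR n * ell_prod k (INR n).

Definition Df {T : rooted_tree} (f : T -> C) (v : T) : R :=
  Cmod (f v - f (parent T v))%C.

Definition in_Lk {T : rooted_tree} (k : nat) (f : T -> C) : Prop :=
  exists M : R, forall v : T, v <> root T -> weight k (depth T v) * Df f v <= M.

Definition in_Lk0 {T : rooted_tree} (k : nat) (f : T -> C) : Prop :=
  in_Lk k f /\
  forall eps : R, 0 < eps -> exists N : nat, forall v : T,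
      v <> root T -> (N <= depth T v)%nat -> weight k (depth T v) * Df f v < eps.

(* ||f||_k = |f(o)| + sup_{v in T*} |v| prod ell_j(|v|) Df(v)
   (the sup over an empty T* is taken to be 0) *)
Definition knorm {T : rooted_tree} (k : nat) (f : T -> C) : R :=
  Cmod (f (root T)) +
  real (Lub_Rbar (fun x => exists v : T, v <> root T /\ x = weight k (depth T v) * Df f v)).

Definition bounded_linear_functional_L0 {T : rooted_tree} (k : nat) (phi : (T -> C) -> C) : Prop :=
  (forall f g, in_Lk0 k f -> in_Lk0 k g -> phi (fun v => f v + g v)%C = (phi f + phi g)%C) /\
  (forall (a : C) f, in_Lk0 k f -> phi (fun v => a * f v)%C = (a * phi f)%C) /\
  (exists c : R, forall f, in_Lk0 k f -> Cmod (phi f) <= c * knorm k f).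

Definition weakly_to_zero_L0 {T : rooted_tree} (k : nat) (fs : nat -> T -> C) : Prop :=
  forall phi, bounded_linear_functional_L0 k phi ->
    is_lim_seq (fun n => Cmod (phi (fs n))) 0.

(* Write a_u = phi(1_u), where 1_u is the indicator of the subtree rooted at u.
   The truncation f_N(v) = f(ancestor of v at depth N) is a finite combination of
   such indicators, so phi(f_N) = f(o) phi(1) + sum_{1 <= |u| <= N} (f(u) - f(u^-)) a_u.
   Testing phi on the truncation whose increments are conj(a_u) / (|a_u| w(|u|))
   gives sum_u |a_u| / w(|u|) <= ||phi||.  Hence, if the weighted increments of f are
   bounded by M, then |phi(f) - phi(f_N)| is at most M times the tail of this
   convergent series, uniformly in f; and for fixed N, phi((f_n)_N) -> 0 since it
   depends on finitely many values of f_n. *)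

From Stdlib Require Import Reals Lra Lia List Arith.
From Stdlib Require Import ClassicalEpsilon FunctionalExtensionality Classical.
From Coquelicot Require Import Coquelicot.
Open Scope R_scope.

Section ListSums.
Variable A : Type.

Fixpoint Csum (l : list A) (F : A -> C) : C :=
  match l with nil => RtoC 0 | u :: l' => (F u + Csum l' F)%C end.

Fixpoint Rsum (l : list A) (F : A -> R) : R :=
  match l with nil => 0 | u :: l' => F u + Rsum l' F end.

Lemma Csum_app l1 l2 F : Csum (l1 ++ l2) F = (Csum l1 F + Csum l2 F)%C.
Proof. induction l1 as [|u l1 IH]; simpl; [ring|]. rewrite IH; ring. Qed.

Lemma Rsum_app l1 l2 F : Rsum (l1 ++ l2) F = Rsum l1 F + Rsum l2 F.
Proof. induction l1 as [|u l1 IH]; simpl; [ring|]. rewrite IH; ring. Qed.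

Lemma Csum_ext l F G : (forall u, In u l -> F u = G u) -> Csum l F = Csum l G.
Proof.
  induction l as [|u l IH]; intros H; simpl; [reflexivity|].
  rewrite H, IH; auto using in_eq, in_cons.
Qed.

Lemma Csum_zero l F : (forall u, In u l -> F u = RtoC 0) -> Csum l F = RtoC 0.
Proof.
  intros H. rewrite (Csum_ext l F (fun _ => RtoC 0)) by exact H. clear H.
  induction l as [|u l IH]; simpl; [reflexivity|]. rewrite IH; ring.
Qed.

Lemma Csum_RtoC l F : Csum l (fun u => RtoC (F u)) = RtoC (Rsum l F).
Proof. induction l as [|u l IH]; simpl; [reflexivity|]. rewrite IH, RtoC_plus. reflexivity. Qed.

Lemma Rsum_scal l M F : Rsum l (fun u => M * F u) = M * Rsum l F.
Proof. induction l as [|u l IH]; simpl; [ring|]. rewrite IH; ring. Qed.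

Lemma Rsum_nonneg l F : (forall u, In u l -> 0 <= F u) -> 0 <= Rsum l F.
Proof.
  induction l as [|u l IH]; intros H; simpl; [lra|].
  pose proof (H u (in_eq u l)). pose proof (IH (fun v Hv => H v (in_cons u v l Hv))). lra.
Qed.

Lemma Cmod_Csum_le l F G : (forall u, In u l -> Cmod (F u) <= G u) -> Cmod (Csum l F) <= Rsum l G.
Proof.
  induction l as [|u l IH]; intros H; simpl; [rewrite Cmod_0; lra|].
  eapply Rle_trans; [apply Cmod_triangle|].
  apply Rplus_le_compat; auto using in_eq, in_cons.
Qed.

Lemma Csum_pick l x F : NoDup l -> In x l ->
  Csum l (fun u => if excluded_middle_informative (x = u) then F u else RtoC 0) = F x.
Proof.
  induction l as [|u l IH]; intros Hnd Hx; [destruct Hx|]. simpl.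
  apply NoDup_cons_iff in Hnd as [Hu Hnd].
  destruct (excluded_middle_informative (x = u)) as [<-|Hxu].
  - rewrite Csum_zero; [ring|]. intros v Hv.
    destruct (excluded_middle_informative (x = v)); [subst; contradiction|reflexivity].
  - destruct Hx as [->|Hx]; [contradiction|]. rewrite IH by assumption. ring.
Qed.

End ListSums.

Arguments Csum {A}. Arguments Rsum {A}.

Section Tree.
Variable T : rooted_tree.
Notation o := (root T).
Notation par := (parent T).
Notation dep := (depth T).

Lemma nonroot_of_depth v : (1 <= dep v)%nat -> v <> o.
Proof. intros H ->. rewrite depth_root in H. lia. Qed.

Fixpoint up (m : nat) (v : T) : T :=
  match m with O => v | S m' => up m' (par v) end.

Lemma up_S m v : up (S m) v = par (up m v).
Proof. revert v; induction m as [|m IH]; intros v; [reflexivity|]. apply (IH (par v)). Qed.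

Lemma depth_up m v : (m <= dep v)%nat -> dep (up m v) = (dep v - m)%nat.
Proof.
  revert v; induction m as [|m IH]; intros v H; simpl; [lia|].
  pose proof (depth_parent T v (nonroot_of_depth v ltac:(lia))). rewrite IH; lia.
Qed.

(* The ancestor of [v] at depth [N], or [v] itself when [dep v <= N]. *)
Definition anc (N : nat) (v : T) : T := up (dep v - N) v.

Lemma anc_id N v : (dep v <= N)%nat -> anc N v = v.
Proof. intros H. unfold anc. replace (dep v - N)%nat with 0%nat by lia. reflexivity. Qed.

Lemma depth_anc N v : (N <= dep v)%nat -> dep (anc N v) = N.
Proof. intros H. unfold anc. rewrite depth_up; lia. Qed.

Lemma anc_parent N v : (N < dep v)%nat -> anc N (par v) = anc N v.
Proof.
  intros H. pose proof (depth_parent T v (nonroot_of_depth v ltac:(lia))). unfold anc.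
  replace (dep v - N)%nat with (S (dep (par v) - N)) by lia. reflexivity.
Qed.

Lemma anc_S N v : (S N <= dep v)%nat -> anc N v = par (anc (S N) v).
Proof.
  intros H. unfold anc. replace (dep v - N)%nat with (S (dep v - S N)) by lia. apply up_S.
Qed.

Lemma anc_root N : anc N o = o.
Proof. apply anc_id. rewrite depth_root. lia. Qed.

Lemma anc_0 v : anc 0 v = o.
Proof. apply depth_zero, depth_anc. lia. Qed.

Definition subtree_ind (u v : T) : C :=
  if excluded_middle_informative (anc (dep u) v = u) then RtoC 1 else RtoC 0.

Lemma subtree_ind_incr u v : v <> o ->
  (subtree_ind u v - subtree_ind u (par v))%C =
  if excluded_middle_informative (u = v) then RtoC 1 else RtoC 0.
Proof.
  intros Hv. pose proof (depth_parent T v Hv) as Hd. unfold subtree_ind.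
  destruct (lt_eq_lt_dec (dep v) (dep u)) as [[Hl|Hl]|Hl].
  - rewrite !anc_id by lia.
    destruct (excluded_middle_informative (v = u)); [subst; lia|].
    destruct (excluded_middle_informative (par v = u)); [subst; lia|].
    destruct (excluded_middle_informative (u = v)); [subst; lia|]. ring.
  - rewrite !anc_id by lia.
    destruct (excluded_middle_informative (par v = u)); [subst; lia|].
    destruct (excluded_middle_informative (v = u)), (excluded_middle_informative (u = v));
      subst; try congruence; ring.
  - rewrite anc_parent by lia.
    destruct (excluded_middle_informative (u = v)); [subst; lia|].
    destruct (excluded_middle_informative (anc (dep u) v = u)); ring.
Qed.

Fixpoint path_sum_from (c : T -> C) (n : nat) (v : T) : C :=
  match n with O => RtoC 0 | S n' => (c v + path_sum_from c n' (par v))%C end.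

Definition path_sum (c : T -> C) (v : T) : C := path_sum_from c (dep v) v.

Lemma path_sum_root c : path_sum c o = RtoC 0.
Proof. unfold path_sum. rewrite depth_root. reflexivity. Qed.

Lemma path_sum_incr c v : v <> o -> (path_sum c v - path_sum c (par v))%C = c v.
Proof. intros Hv. unfold path_sum. rewrite (depth_parent T v Hv). cbn [path_sum_from]. ring. Qed.

Lemma level_exists j : exists l, NoDup l /\ forall u, In u l <-> dep u = j.
Proof.
  induction j as [|j [l [Hnd Hl]]].
  - exists (o :: nil). split; [repeat constructor; intros []|].
    intros u. split; [intros [<-|[]]; apply depth_root|].
    intros H. left. symmetry. apply depth_zero, H.
  - (* The only use of local finiteness. *)
    assert (Hch : exists L, forall u, u <> o -> In (par u) l -> In u L).
    { clear Hnd Hl. induction l as [|w l [L HL]]; [exists nil; intros u _ []|].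
      destruct (locally_finite T w) as [lw Hw]. exists (lw ++ L).
      intros u Hu [E|Hin]; apply in_or_app; [left; apply Hw; left; auto|right; auto]. }
    destruct Hch as [L HL].
    exists (nodup (fun x y : T => excluded_middle_informative (x = y))
                  (filter (fun u => Nat.eqb (dep u) (S j)) L)).
    split; [apply NoDup_nodup|]. intros u.
    rewrite nodup_In, filter_In, Nat.eqb_eq. split; [tauto|]. intros Hu. split; [|exact Hu].
    assert (Hu0 : u <> o) by (apply nonroot_of_depth; lia).
    apply HL; [exact Hu0|]. apply Hl. pose proof (depth_parent T u Hu0). lia.
Qed.

Definition level (j : nat) : list T :=
  proj1_sig (constructive_indefinite_description _ (level_exists j)).

Lemma level_spec j : NoDup (level j) /\ forall u, In u (level j) <-> dep u = j.
Proof. exact (proj2_sig (constructive_indefinite_description _ (level_exists j))). Qed.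

Lemma in_level j u : In u (level j) <-> dep u = j.
Proof. apply level_spec. Qed.

Fixpoint ball (N : nat) : list T :=
  match N with O => nil | S N' => ball N' ++ level (S N') end.

Lemma in_ball N u : In u (ball N) -> (1 <= dep u <= N)%nat.
Proof.
  induction N as [|N IH]; simpl; [intros []|].
  intros Hu. apply in_app_or in Hu as [Hu|Hu]; [specialize (IH Hu); lia|].
  apply in_level in Hu. lia.
Qed.

Lemma Csum_level_subtree_ind j F v :
  Csum (level j) (fun u => F u * subtree_ind u v)%C =
  if le_dec j (dep v) then F (anc j v) else RtoC 0.
Proof.
  rewrite (Csum_ext _ _ _
    (fun u => if excluded_middle_informative (anc j v = u) then F u else RtoC 0)).
  - destruct (le_dec j (dep v)) as [Hj|Hj].
    + apply Csum_pick; [apply level_spec|]. apply in_level, depth_anc, Hj.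
    + apply Csum_zero. intros u Hu. apply in_level in Hu.
      destruct (excluded_middle_informative (anc j v = u)) as [E|]; [|reflexivity].
      rewrite anc_id in E by lia. subst. lia.
  - intros u Hu. apply in_level in Hu. subst j. unfold subtree_ind.
    destruct (excluded_middle_informative (anc (dep u) v = u)); ring.
Qed.

Lemma Cmod_Csum_ball_sub N K F G : (N <= K)%nat ->
  (forall u, (N < dep u)%nat -> Cmod (F u) <= G u) ->
  Cmod (Csum (ball K) F - Csum (ball N) F) <= Rsum (ball K) G - Rsum (ball N) G.
Proof.
  intros HNK HFG. induction K as [|K IH].
  - replace N with 0%nat by lia. simpl. unfold Cminus. rewrite Cplus_opp_r, Cmod_0. lra.
  - destruct (Nat.eq_dec N (S K)) as [->|HN].
    + unfold Cminus. rewrite Cplus_opp_r, Cmod_0. lra.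
    + simpl. rewrite Csum_app, Rsum_app.
      replace (Csum (ball K) F + Csum (level (S K)) F - Csum (ball N) F)%C
        with ((Csum (ball K) F - Csum (ball N) F) + Csum (level (S K)) F)%C by ring.
      eapply Rle_trans; [apply Cmod_triangle|].
      assert (Cmod (Csum (level (S K)) F) <= Rsum (level (S K)) G);
        [|specialize (IH ltac:(lia)); lra].
      apply Cmod_Csum_le. intros u Hu. apply HFG. apply in_level in Hu. lia.
Qed.

Definition trunc (N : nat) (f : T -> C) : T -> C := fun v => f (anc N v).

Lemma trunc_incr N f v : v <> o ->
  (trunc N f v - trunc N f (par v))%C = if le_dec (dep v) N then (f v - f (par v))%C else RtoC 0.
Proof.
  intros Hv. pose proof (depth_parent T v Hv). unfold trunc.
  destruct (le_dec (dep v) N).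
  - rewrite !anc_id by lia. reflexivity.
  - rewrite anc_parent by lia. ring.
Qed.

Lemma trunc_decomp N f :
  trunc N f = fun v => (f o + Csum (ball N) (fun u => (f u - f (par u)) * subtree_ind u v))%C.
Proof.
  apply functional_extensionality. intros v. unfold trunc. induction N as [|N IH].
  - rewrite anc_0. simpl. ring.
  - simpl. rewrite Csum_app, Csum_level_subtree_ind, Cplus_assoc, <- IH.
    destruct (le_dec (S N) (dep v)).
    + rewrite (anc_S N v) by assumption. ring.
    + rewrite !anc_id by lia. ring.
Qed.

End Tree.

Lemma ln_nonneg x : 1 <= x -> 0 <= ln x.
Proof. intros Hx. rewrite <- ln_1. apply ln_le; lra. Qed.

Lemma ell_ge1 j x : 1 <= x -> 1 <= ell j x.
Proof.
  intros Hx. induction j as [|j IH]; simpl; [lra|]. destruct j.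
  - pose proof (ln_nonneg x Hx). lra.
  - pose proof (ln_nonneg _ IH). lra.
Qed.

Lemma ell_prod_ge1 k x : 1 <= x -> 1 <= ell_prod k x.
Proof. intros Hx. induction k as [|k IH]; simpl; [lra|]. pose proof (ell_ge1 k x Hx). nra. Qed.

Lemma weight_pos k n : (1 <= n)%nat -> 0 < weight k n.
Proof.
  intros H. unfold weight. apply (le_INR 1) in H. simpl in H.
  pose proof (ell_prod_ge1 k (INR n) H). nra.
Qed.

Lemma weight_nonneg k n : 0 <= weight k n.
Proof. destruct n as [|n]; [unfold weight; simpl; lra|]. left. apply weight_pos. lia. Qed.

Section Lk0.
Variable T : rooted_tree.
Variable k : nat.
Notation o := (root T).
Notation par := (parent T).
Notation dep := (depth T).

Let incr_set (f : T -> C) : R -> Prop :=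
  fun x => exists v : T, v <> o /\ x = weight k (dep v) * Df f v.

Lemma knorm_le (f : T -> C) B : 0 <= B ->
  (forall v, v <> o -> weight k (dep v) * Df f v <= B) -> knorm k f <= Cmod (f o) + B.
Proof.
  intros HB H. unfold knorm. apply Rplus_le_compat_l. fold (incr_set f).
  assert (Hlub : Rbar_le (Lub_Rbar (incr_set f)) B).
  { apply Lub_Rbar_correct. intros x [v [Hv ->]]. apply H, Hv. }
  destruct (Lub_Rbar (incr_set f)); simpl in *; easy.
Qed.

Lemma Cmod_root_add_incr_le_knorm (f : T -> C) v : in_Lk k f -> v <> o ->
  Cmod (f o) + weight k (dep v) * Df f v <= knorm k f.
Proof.
  intros [M HM] Hv. unfold knorm. apply Rplus_le_compat_l. fold (incr_set f).
  assert (Hub : Rbar_le (Lub_Rbar (incr_set f)) M).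
  { apply Lub_Rbar_correct. intros x [w [Hw ->]]. apply HM, Hw. }
  assert (Hx : Rbar_le (weight k (dep v) * Df f v) (Lub_Rbar (incr_set f)))
    by (apply Lub_Rbar_correct; exists v; auto).
  destruct (Lub_Rbar (incr_set f)); simpl in *; easy.
Qed.

Lemma Cmod_root_le_knorm (f : T -> C) : Cmod (f o) <= knorm k f.
Proof.
  unfold knorm. fold (incr_set f).
  cut (0 <= real (Lub_Rbar (incr_set f))); [lra|].
  destruct (classic (exists v : T, v <> o)) as [[v Hv]|Hnone].
  - assert (Hx : Rbar_le (weight k (dep v) * Df f v) (Lub_Rbar (incr_set f)))
      by (apply Lub_Rbar_correct; exists v; auto).
    pose proof (weight_nonneg k (dep v)). pose proof (Cmod_ge_0 (f v - f (par v))%C).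
    unfold Df in Hx.
    destruct (Lub_Rbar (incr_set f)); simpl in *; [|lra|lra]. nra.
  - assert (Hempty : Lub_Rbar (incr_set f) = m_infty).
    { apply is_lub_Rbar_unique. split.
      - intros x [v [Hv _]]. exfalso. apply Hnone. eauto.
      - intros b _. destruct b; simpl; auto. }
    rewrite Hempty. simpl. lra.
Qed.

Lemma knorm_nonneg (f : T -> C) : 0 <= knorm k f.
Proof. eapply Rle_trans; [apply Cmod_ge_0|apply Cmod_root_le_knorm]. Qed.

Lemma knorm_bound_nonneg (phi : (T -> C) -> C) :
  (exists c, forall f, in_Lk0 k f -> Cmod (phi f) <= c * knorm k f) ->
  exists c, 0 <= c /\ forall f, in_Lk0 k f -> Cmod (phi f) <= c * knorm k f.
Proof.
  intros [c Hc]. exists (Rmax c 0). split; [apply Rmax_r|].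
  intros f Hf. eapply Rle_trans; [apply Hc, Hf|].
  apply Rmult_le_compat_r; [apply knorm_nonneg|apply Rmax_l].
Qed.

Lemma in_Lk0_plus (f g : T -> C) :
  in_Lk0 k f -> in_Lk0 k g -> in_Lk0 k (fun v => f v + g v)%C.
Proof.
  intros [[M1 H1] E1] [[M2 H2] E2].
  assert (Hd : forall v, weight k (dep v) * Df (fun v => f v + g v)%C v <=
                         weight k (dep v) * Df f v + weight k (dep v) * Df g v).
  { intros v. rewrite <- Rmult_plus_distr_l. apply Rmult_le_compat_l; [apply weight_nonneg|].
    unfold Df.
    replace (f v + g v - (f (par v) + g (par v)))%C
      with ((f v - f (par v)) + (g v - g (par v)))%C by ring.
    apply Cmod_triangle. }
  split.
  - exists (M1 + M2). intros v Hv. specialize (H1 v Hv). specialize (H2 v Hv).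
    specialize (Hd v). lra.
  - intros eps He. destruct (E1 (eps / 2)) as [N1 HN1]; [lra|].
    destruct (E2 (eps / 2)) as [N2 HN2]; [lra|].
    exists (max N1 N2). intros v Hv HN.
    specialize (HN1 v Hv ltac:(lia)). specialize (HN2 v Hv ltac:(lia)). specialize (Hd v). lra.
Qed.

Lemma in_Lk0_scal (a : C) (f : T -> C) : in_Lk0 k f -> in_Lk0 k (fun v => a * f v)%C.
Proof.
  intros [[M HM] E].
  assert (Hd : forall v, weight k (dep v) * Df (fun v => a * f v)%C v =
                         Cmod a * (weight k (dep v) * Df f v)).
  { intros v. unfold Df.
    replace (a * f v - a * f (par v))%C with (a * (f v - f (par v)))%C by ring.
    rewrite Cmod_mult. ring. }
  pose proof (Cmod_ge_0 a) as Ha.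
  split.
  - exists (Cmod a * M). intros v Hv. rewrite Hd. apply Rmult_le_compat_l; auto.
  - intros eps He. destruct (E (eps / (Cmod a + 1))) as [N HN].
    { apply Rdiv_lt_0_compat; lra. }
    exists N. intros v Hv HNv. rewrite Hd. specialize (HN v Hv HNv).
    pose proof (weight_nonneg k (dep v)). pose proof (Cmod_ge_0 (f v - f (par v))%C).
    unfold Df in *.
    apply Rle_lt_trans with ((Cmod a + 1) * (weight k (dep v) * Cmod (f v - f (par v)))); [nra|].
    replace eps with ((Cmod a + 1) * (eps / (Cmod a + 1))) by (field; lra).
    apply Rmult_lt_compat_l; lra.
Qed.

Lemma in_Lk0_sub (f g : T -> C) : in_Lk0 k f -> in_Lk0 k g -> in_Lk0 k (fun v => f v - g v)%C.
Proof.
  intros Hf Hg.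
  replace (fun v => f v - g v)%C with (fun v => f v + (- RtoC 1) * g v)%C
    by (apply functional_extensionality; intros v; ring).
  apply in_Lk0_plus, in_Lk0_scal; assumption.
Qed.

Lemma in_Lk0_const (a : C) : in_Lk0 k (fun _ : T => a).
Proof.
  assert (Hd : forall v, Df (fun _ : T => a) v = 0).
  { intros v. unfold Df. replace (a - a)%C with (RtoC 0) by ring. apply Cmod_0. }
  split.
  - exists 0. intros v _. rewrite Hd. lra.
  - intros eps He. exists 0%nat. intros v _ _. rewrite Hd. lra.
Qed.

Lemma in_Lk0_subtree_ind u : in_Lk0 k (subtree_ind T u).
Proof.
  assert (Hd : forall v, v <> o ->
            Df (subtree_ind T u) v = if excluded_middle_informative (u = v) then 1 else 0).
  { intros v Hv. unfold Df. rewrite subtree_ind_incr by exact Hv.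
    destruct (excluded_middle_informative (u = v)); [apply Cmod_1|apply Cmod_0]. }
  split.
  - exists (weight k (dep u)). intros v Hv. rewrite Hd by exact Hv.
    destruct (excluded_middle_informative (u = v)) as [<-|]; [lra|].
    pose proof (weight_nonneg k (dep u)). lra.
  - intros eps He. exists (S (dep u)). intros v Hv HN. rewrite Hd by exact Hv.
    destruct (excluded_middle_informative (u = v)) as [<-|]; [lia|lra].
Qed.

Lemma in_Lk0_Csum {A} (l : list A) (a : A -> C) (g : A -> T -> C) :
  (forall u, In u l -> in_Lk0 k (g u)) -> in_Lk0 k (fun v => Csum l (fun u => a u * g u v))%C.
Proof.
  induction l as [|u l IH]; intros Hg; simpl; [apply in_Lk0_const|].
  apply in_Lk0_plus; [apply in_Lk0_scal|apply IH]; auto using in_eq, in_cons.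
Qed.

End Lk0.

Lemma is_lim_seq_squeeze0 (x y : nat -> R) :
  (forall n, 0 <= x n <= y n) -> is_lim_seq y 0 -> is_lim_seq x 0.
Proof. intros H Hy. exact (is_lim_seq_le_le (fun _ => 0) x y 0 H (is_lim_seq_const 0) Hy). Qed.

Lemma is_lim_seq_plus0 (x y : nat -> R) :
  is_lim_seq x 0 -> is_lim_seq y 0 -> is_lim_seq (fun n => x n + y n) 0.
Proof.
  intros Hx Hy. pose proof (is_lim_seq_plus' x y 0 0 Hx Hy) as H.
  rewrite Rplus_0_r in H. exact H.
Qed.

Lemma is_lim_seq_Cmod_plus0 (x y : nat -> C) :
  is_lim_seq (fun n => Cmod (x n)) 0 -> is_lim_seq (fun n => Cmod (y n)) 0 ->
  is_lim_seq (fun n => Cmod (x n + y n)%C) 0.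
Proof.
  intros Hx Hy. apply (is_lim_seq_squeeze0 _ _ (fun n => conj (Cmod_ge_0 _) (Cmod_triangle _ _))).
  apply is_lim_seq_plus0; assumption.
Qed.

Lemma is_lim_seq_Cmod_sub0 (x y : nat -> C) :
  is_lim_seq (fun n => Cmod (x n)) 0 -> is_lim_seq (fun n => Cmod (y n)) 0 ->
  is_lim_seq (fun n => Cmod (x n - y n)%C) 0.
Proof.
  intros Hx Hy. apply is_lim_seq_Cmod_plus0; [exact Hx|].
  apply (is_lim_seq_ext (fun n => Cmod (y n))); [intros n; symmetry; apply Cmod_opp|exact Hy].
Qed.

Lemma is_lim_seq_Cmod_mul0 (x : nat -> C) (a : C) :
  is_lim_seq (fun n => Cmod (x n)) 0 -> is_lim_seq (fun n => Cmod (x n * a)%C) 0.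
Proof.
  intros Hx. pose proof (is_lim_seq_scal_r _ (Cmod a) 0 Hx) as H. simpl in H.
  rewrite Rmult_0_l in H. apply (is_lim_seq_ext _ _ _ (fun n => eq_sym (Cmod_mult _ _)) H).
Qed.

Lemma is_lim_seq_Cmod_Csum0 {A} (l : list A) (F : nat -> A -> C) :
  (forall u, In u l -> is_lim_seq (fun n => Cmod (F n u)) 0) ->
  is_lim_seq (fun n => Cmod (Csum l (F n))) 0.
Proof.
  induction l as [|u l IH]; intros H; simpl.
  - apply (is_lim_seq_ext (fun _ => 0)); [intros; symmetry; apply Cmod_0|apply is_lim_seq_const].
  - apply is_lim_seq_Cmod_plus0; auto using in_eq, in_cons.
Qed.

Lemma is_lim_seq_0_of_approx (x : nat -> R) (B : R) : 0 <= B -> (forall n, 0 <= x n) ->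
  (forall eps, 0 < eps -> exists y, is_lim_seq y 0 /\ forall n, x n <= B * eps + y n) ->
  is_lim_seq x 0.
Proof.
  intros HB Hx Happrox. apply is_lim_seq_spec. intros eps.
  pose proof (cond_pos eps) as He.
  destruct (Happrox (eps / (2 * (B + 1)))) as [y [Hy Hxy]]; [apply Rdiv_lt_0_compat; lra|].
  apply is_lim_seq_spec in Hy. destruct (Hy (pos_div_2 eps)) as [N HN]. simpl in HN.
  exists N. intros n Hn. specialize (HN n Hn). specialize (Hxy n). specialize (Hx n).
  rewrite Rminus_0_r in *. rewrite Rabs_pos_eq by exact Hx. apply Rabs_lt_between in HN.
  assert (B * (eps / (2 * (B + 1))) < eps / 2); [|lra].
  apply (Rmult_lt_reg_r (2 * (B + 1))); [lra|]. field_simplify; nra.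
Qed.

Section Functional.
Variable T : rooted_tree.
Variable k : nat.
Notation o := (root T).
Notation par := (parent T).
Notation dep := (depth T).
Variable phi : (T -> C) -> C.
Hypothesis phi_add : forall f g, in_Lk0 k f -> in_Lk0 k g ->
  phi (fun v => f v + g v)%C = (phi f + phi g)%C.
Hypothesis phi_scal : forall (a : C) f, in_Lk0 k f -> phi (fun v => a * f v)%C = (a * phi f)%C.

Lemma phi_const (a : C) : phi (fun _ => a) = (a * phi (fun _ => RtoC 1))%C.
Proof.
  rewrite <- phi_scal by apply in_Lk0_const. f_equal.
  apply functional_extensionality. intros. ring.
Qed.

Lemma phi_sub f g : in_Lk0 k f -> in_Lk0 k g -> phi (fun v => f v - g v)%C = (phi f - phi g)%C.
Proof.
  intros Hf Hg.
  replace (fun v => f v - g v)%C with (fun v => f v + (- RtoC 1) * g v)%C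
    by (apply functional_extensionality; intros v; ring).
  rewrite phi_add, phi_scal by auto using in_Lk0_scal. ring.
Qed.

Lemma phi_Csum {A} (l : list A) (a : A -> C) (g : A -> T -> C) :
  (forall u, In u l -> in_Lk0 k (g u)) ->
  phi (fun v => Csum l (fun u => a u * g u v))%C = Csum l (fun u => a u * phi (g u))%C.
Proof.
  induction l as [|u l IH]; intros Hg; simpl.
  - rewrite phi_const. ring.
  - rewrite phi_add, phi_scal, IH; auto using in_eq, in_cons, in_Lk0_scal, in_Lk0_Csum.
Qed.

Lemma in_Lk0_trunc N f : in_Lk0 k (trunc T N f).
Proof.
  rewrite trunc_decomp. apply in_Lk0_plus; [apply in_Lk0_const|].
  apply in_Lk0_Csum. intros. apply in_Lk0_subtree_ind.
Qed.

Notation coef u := (phi (subtree_ind T u)).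

Lemma phi_trunc N f : phi (trunc T N f) =
  (f o * phi (fun _ => RtoC 1) + Csum (ball T N) (fun u => (f u - f (par u)) * coef u))%C.
Proof.
  rewrite trunc_decomp, phi_add, phi_const, phi_Csum;
    auto using in_Lk0_const, in_Lk0_Csum, in_Lk0_subtree_ind.
Qed.

Lemma is_lim_seq_phi_trunc0 N (fs : nat -> T -> C) :
  (forall v, is_lim_seq (fun n => Cmod (fs n v)) 0) ->
  is_lim_seq (fun n => Cmod (phi (trunc T N (fs n)))) 0.
Proof.
  intros Hpt. apply (is_lim_seq_ext (fun n => Cmod (fs n o * phi (fun _ => RtoC 1) +
      Csum (ball T N) (fun u => (fs n u - fs n (par u)) * coef u))%C)).
  { intros n. rewrite phi_trunc. reflexivity. }
  apply is_lim_seq_Cmod_plus0; [apply is_lim_seq_Cmod_mul0, Hpt|].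
  apply is_lim_seq_Cmod_Csum0. intros u _.
  apply is_lim_seq_Cmod_mul0, is_lim_seq_Cmod_sub0; apply Hpt.
Qed.

Variable c : R.
Hypothesis c_nonneg : 0 <= c.
Hypothesis phi_bounded : forall f, in_Lk0 k f -> Cmod (phi f) <= c * knorm k f.

Definition coef_sum (N : nat) : R := Rsum (ball T N) (fun u => Cmod (coef u) / weight k (dep u)).

Definition norming_incr (u : T) : C :=
  if Ceq_dec (coef u) (RtoC 0) then RtoC 0
  else (Cconj (coef u) * RtoC (/ (Cmod (coef u) * weight k (dep u))))%C.

Lemma norming_incr_mul u : (1 <= dep u)%nat ->
  (norming_incr u * coef u)%C = RtoC (Cmod (coef u) / weight k (dep u)).
Proof.
  intros Hu. pose proof (weight_pos k _ Hu). unfold norming_incr.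
  destruct (Ceq_dec (coef u) (RtoC 0)) as [E|E].
  - rewrite E, Cmod_0. unfold Rdiv. rewrite Rmult_0_l. ring.
  - pose proof (proj1 (Cmod_gt_0 _) E).
    replace (Cconj (coef u) * RtoC (/ (Cmod (coef u) * weight k (dep u))) * coef u)%C
      with ((coef u * Cconj (coef u)) * RtoC (/ (Cmod (coef u) * weight k (dep u))))%C by ring.
    rewrite <- Cmod2_conj, <- RtoC_mult. f_equal. field. lra.
Qed.

Lemma weight_norming_incr_le1 u : (1 <= dep u)%nat ->
  weight k (dep u) * Cmod (norming_incr u) <= 1.
Proof.
  intros Hu. pose proof (weight_pos k _ Hu). unfold norming_incr.
  destruct (Ceq_dec (coef u) (RtoC 0)) as [E|E]; [rewrite Cmod_0; lra|].
  pose proof (proj1 (Cmod_gt_0 _) E).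
  rewrite Cmod_mult, Cmod_conj, Cmod_R, Rabs_pos_eq.
  - right. field. lra.
  - left. apply Rinv_0_lt_compat, Rmult_lt_0_compat; assumption.
Qed.

Lemma coef_sum_le N : coef_sum N <= c.
Proof.
  set (g := trunc T N (path_sum T norming_incr)).
  assert (Hphi : phi g = RtoC (coef_sum N)).
  { unfold g, coef_sum.
    rewrite phi_trunc, path_sum_root, <- Csum_RtoC, Cmult_0_l, Cplus_0_l.
    apply Csum_ext. intros u Hu. pose proof (in_ball T N u Hu) as Hdu.
    rewrite path_sum_incr by (apply nonroot_of_depth; lia). apply norming_incr_mul. lia. }
  assert (Hnorm : knorm k g <= 1).
  { eapply Rle_trans; [apply knorm_le with (B := 1); [lra|]|].
    - intros v Hv. unfold Df, g. rewrite trunc_incr, path_sum_incr by exact Hv.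
      pose proof (depth_parent T v Hv).
      destruct (le_dec (dep v) N); [apply weight_norming_incr_le1; lia|].
      rewrite Cmod_0, Rmult_0_r. lra.
    - unfold g, trunc. rewrite anc_root, path_sum_root, Cmod_0. lra. }
  pose proof (phi_bounded g (in_Lk0_trunc N _)) as Hb.
  rewrite Hphi, Cmod_R, Rabs_pos_eq in Hb.
  - pose proof (Rmult_le_compat_l c _ _ c_nonneg Hnorm). lra.
  - unfold coef_sum. apply Rsum_nonneg. intros u Hu. pose proof (in_ball T N u Hu).
    apply Rdiv_le_0_compat; [apply Cmod_ge_0|apply weight_pos; lia].
Qed.

Lemma coef_sum_tail eps : 0 < eps ->
  exists N, forall K, (N <= K)%nat -> coef_sum K - coef_sum N <= eps.
Proof.
  intros He.
  assert (Hmono : forall N, coef_sum N <= coef_sum (S N)).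
  { intros N. unfold coef_sum. simpl. rewrite Rsum_app.
    cut (0 <= Rsum (level T (S N)) (fun u => Cmod (coef u) / weight k (dep u))); [lra|].
    apply Rsum_nonneg. intros u Hu. apply in_level in Hu.
    apply Rdiv_le_0_compat; [apply Cmod_ge_0|apply weight_pos; lia]. }
  pose proof (ex_finite_lim_seq_incr coef_sum c Hmono coef_sum_le) as Hlim.
  apply ex_lim_seq_cauchy_corr in Hlim. destruct (Hlim (mkposreal eps He)) as [N HN].
  exists N. intros K HK. specialize (HN K N HK (le_n N)). simpl in HN.
  apply Rabs_lt_between in HN. lra.
Qed.

Lemma phi_trunc_sub_le f M N K : (N <= K)%nat -> 0 <= M ->
  (forall v, v <> o -> weight k (dep v) * Df f v <= M) ->
  Cmod (phi (trunc T K f) - phi (trunc T N f)) <= M * (coef_sum K - coef_sum N).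
Proof.
  intros HNK HM Hf. rewrite !phi_trunc.
  set (x := (f o * phi (fun _ => RtoC 1))%C).
  set (F := fun u => ((f u - f (par u)) * coef u)%C).
  replace (x + Csum (ball T K) F - (x + Csum (ball T N) F))%C
    with (Csum (ball T K) F - Csum (ball T N) F)%C by ring.
  unfold coef_sum. rewrite Rmult_minus_distr_l, <- !Rsum_scal.
  apply Cmod_Csum_ball_sub; [exact HNK|]. intros u Hu.
  assert (Hu0 : u <> o) by (apply nonroot_of_depth; lia).
  pose proof (weight_pos k (dep u) ltac:(lia)). specialize (Hf u Hu0).
  unfold F. rewrite Cmod_mult. fold (Df f u).
  assert (Df f u <= M / weight k (dep u)).
  { apply (Rmult_le_reg_l (weight k (dep u))); [assumption|]. field_simplify; lra. }
  replace (M * (Cmod (coef u) / weight k (dep u)))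
    with (M / weight k (dep u) * Cmod (coef u)) by (field; lra).
  apply Rmult_le_compat_r; [apply Cmod_ge_0|assumption].
Qed.

Lemma phi_sub_trunc_le f K eta : in_Lk0 k f -> 0 <= eta ->
  (forall v, v <> o -> (K < dep v)%nat -> weight k (dep v) * Df f v <= eta) ->
  Cmod (phi f - phi (trunc T K f)) <= c * eta.
Proof.
  intros Hf Heta Htail. rewrite <- phi_sub by auto using in_Lk0_trunc.
  eapply Rle_trans; [apply phi_bounded, in_Lk0_sub; auto using in_Lk0_trunc|].
  apply Rmult_le_compat_l; [exact c_nonneg|].
  eapply Rle_trans; [apply knorm_le with (B := eta); [exact Heta|]|].
  - intros v Hv. unfold Df.
    replace (f v - trunc T K f v - (f (par v) - trunc T K f (par v)))%C
      with ((f v - f (par v)) - (trunc T K f v - trunc T K f (par v)))%C by ring.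
    rewrite trunc_incr by exact Hv. destruct (le_dec (dep v) K).
    + unfold Cminus at 1. rewrite Cplus_opp_r, Cmod_0, Rmult_0_r. exact Heta.
    + replace (f v - f (par v) - RtoC 0)%C with (f v - f (par v))%C by ring.
      apply Htail; [exact Hv|lia].
  - unfold trunc. rewrite anc_root. unfold Cminus. rewrite Cplus_opp_r, Cmod_0. lra.
Qed.

Lemma phi_sub_trunc_approx f M N eps : in_Lk0 k f -> 0 <= M ->
  (forall v, v <> o -> weight k (dep v) * Df f v <= M) ->
  (forall K, (N <= K)%nat -> coef_sum K - coef_sum N <= eps) ->
  Cmod (phi f - phi (trunc T N f)) <= M * eps.
Proof.
  intros Hf HM HfM Htail. apply le_epsilon. intros eta Heta.
  destruct (proj2 Hf (eta / (c + 1))) as [K HK]; [apply Rdiv_lt_0_compat; lra|].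
  set (K' := max N K).
  replace (phi f - phi (trunc T N f))%C
    with ((phi f - phi (trunc T K' f)) + (phi (trunc T K' f) - phi (trunc T N f)))%C by ring.
  eapply Rle_trans; [apply Cmod_triangle|].
  rewrite (Rplus_comm (M * eps) eta). apply Rplus_le_compat.
  - eapply Rle_trans.
    + apply (phi_sub_trunc_le f K' (eta / (c + 1))); [exact Hf| |].
      * left. apply Rdiv_lt_0_compat; lra.
      * intros v Hv HK'. left. apply HK; [exact Hv|lia].
    + apply (Rmult_le_reg_r (c + 1)); [lra|]. field_simplify; nra.
  - eapply Rle_trans; [apply phi_trunc_sub_le; [lia|exact HM|exact HfM]|].
    apply Rmult_le_compat_l; [exact HM|]. apply Htail. lia.
Qed.

Lemma is_lim_seq_phi0 (fs : nat -> T -> C) M : 0 <= M ->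
  (forall n, in_Lk0 k (fs n)) ->
  (forall n v, v <> o -> weight k (dep v) * Df (fs n) v <= M) ->
  (forall v, is_lim_seq (fun n => Cmod (fs n v)) 0) ->
  is_lim_seq (fun n => Cmod (phi (fs n))) 0.
Proof.
  intros HM fs_L0 fs_incr fs_pt.
  apply (is_lim_seq_0_of_approx _ M HM); [intros; apply Cmod_ge_0|]. intros eps Heps.
  destruct (coef_sum_tail eps Heps) as [N HN].
  exists (fun n => Cmod (phi (trunc T N (fs n)))).
  split; [apply is_lim_seq_phi_trunc0, fs_pt|]. intros n.
  replace (phi (fs n)) with ((phi (fs n) - phi (trunc T N (fs n))) + phi (trunc T N (fs n)))%C
    by ring.
  eapply Rle_trans; [apply Cmod_triangle|]. apply Rplus_le_compat_r.
  apply phi_sub_trunc_approx; auto.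
Qed.

End Functional.

Theorem proposition2p11 (T : rooted_tree) (k : nat) (fs : nat -> T -> C) :
  (forall n, in_Lk0 k (fs n)) ->
  (forall v : T, is_lim_seq (fun n => Cmod (fs n v)) 0) ->
  (exists M : R, forall n, knorm k (fs n) <= M) ->
  weakly_to_zero_L0 k fs.
Proof.
  intros fs_L0 fs_pt [M fs_bd] phi [phi_add [phi_scal phi_bd]].
  destruct (knorm_bound_nonneg T k phi phi_bd) as [c [c_nonneg phi_bd']].
  apply (is_lim_seq_phi0 T k phi phi_add phi_scal c c_nonneg phi_bd' fs M); auto.
  - eapply Rle_trans; [apply knorm_nonneg|apply (fs_bd 0%nat)].
  - intros n v Hv. pose proof (Cmod_root_add_incr_le_knorm T k (fs n) v (proj1 (fs_L0 n)) Hv).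
    pose proof (Cmod_ge_0 (fs n (root T))). pose proof (fs_bd n). lra.
Qed.
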